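(* Let $s,r,R$ be positive integers and $\delta=(r+1)(R+1)-sr-1$. If $\delta\le 0$, then the ball $B(R)\subseteq\mathbb F_q^{s\times r}$ is $R$-closed with respect to the NRT metric; equivalently, for every $x\in\mathbb F_q^{s\times r}$ with $w(x)\ge R+1$ there is $c\in\mathbb F_q^{s\times r}$ with $d(c,x)\le R$ and $B(c,R)\cap B(R)=\emptyset$.
   Context: $q$ is a prime power, $\mathbb F_q^{s\times r}$ the set of $s\times r$ matrices over $\mathbb F_q$ with rows in $\mathbb F_q^{1\times r}$. For a row $y=(y_1,\dots,y_r)$, the NRT weight is $w(y)=\max\{j: y_j\neq 0\}$ if $y\neq0$ and $w(0)=0$; for a matrix, $w(x)=\sum_i w(x_i)$. The NRT metric is $d(x,y)=w(x-y)$; $B(c,R)=\{x: d(x,c)\le R\}$, $B(R)=B(0,R)$. A set is $R$-closed if its complement is a union of balls of radius $R$. *)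

From mathcomp Require Import all_boot all_order all_algebra.
Set Implicit Arguments. Unset Strict Implicit. Unset Printing Implicit Defensive.
Import GRing.Theory.
Local Open Scope ring_scope.

Section NRT.
Variables (F : finFieldType) (s r : nat).

(* NRT weight of a row y = (y_1,...,y_r): the largest (1-based) index j
   with y_j != 0, and 0 if y = 0. Column j : 'I_r has 1-based index j.+1. *)
Definition nrt_row_weight (y : 'rV[F]_r) : nat :=
  \max_(j < r | y 0 j != 0) j.+1.

Definition nrt_weight (x : 'M[F]_(s, r)) : nat :=
  \sum_(i < s) nrt_row_weight (row i x).

Definition nrt_dist (x y : 'M[F]_(s, r)) : nat := nrt_weight (x - y).

Definition nrt_ball (c : 'M[F]_(s, r)) (R : nat) : {set 'M[F]_(s, r)} :=
  [set x | (nrt_dist x c <= R)%N].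

Definition R_closed (R : nat) (A : {set 'M[F]_(s, r)}) : Prop :=
  exists C : {set 'M[F]_(s, r)}, ~: A = \bigcup_(c in C) nrt_ball c R.

End NRT.

From mathcomp Require Import all_boot all_order all_algebra zify.
Import GRing.Theory.
Set Implicit Arguments. Unset Strict Implicit. Unset Printing Implicit Defensive.

(* Since every ball of radius R around a center c of weight > 2R misses B(R) by
   the triangle inequality, it suffices to move any x of weight > R by at most R
   to such a center. Choose at most R+1 rows of x carrying weight > R; the other
   >= s-R-1 rows can absorb R further units of weight (at most r per row), which
   is possible when R <= (s-R-1) r, i.e. delta <= 0. Raising a row to weight t
   costs at most t, since it is done by writing a 1 in column t. *)

Section Combinatorics.
Variable T : finType.

Lemma ex_card_subset (A : {set T}) n :
  (n <= #|A|)%N -> exists2 B : {set T}, B \subset A & #|B| = n.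
Proof.
move=> hn; exists [set x in take n (enum A)].
  by apply/subsetP => x; rewrite inE => /mem_take; rewrite mem_enum.
by rewrite cardsE (card_uniqP _) ?take_uniq ?enum_uniq // size_takel -?cardE.
Qed.

Lemma ex_small_heavy_set (a : T -> nat) R :
  (R < \sum_i a i)%N ->
  exists2 N : {set T}, (#|N| <= R.+1)%N & (R < \sum_(i in N) a i)%N.
Proof.
move=> ha; pose P := [set i | a i != 0%N].
have [hP | hP] := leqP R.+1 #|P|.
  have [N sNP cN] := ex_card_subset hP; exists N; first by rewrite cN.
  rewrite -cN -sum1_card; apply: leq_sum => i /(subsetP sNP).
  by rewrite inE lt0n.
exists P; first exact: ltnW.
move: ha; rewrite (bigID (mem P)) /= [X in _ + X]big1 ?addn0 // => i.
by rewrite inE negbK => /eqP.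
Qed.

Lemma ex_capped_distribution (M : {set T}) (r B : nat) :
  (B <= #|M| * r)%N -> exists t : T -> nat,
    [/\ forall i, (t i <= r)%N, forall i, i \notin M -> t i = 0%N
      & \sum_i t i = B].
Proof.
elim: B => [|B IH] hB; first by exists (fun=> 0%N); split; rewrite ?big1.
have [t [tr tM ts]] := IH (ltnW hB).
have [i iM ti] : exists2 i, i \in M & (t i < r)%N.
  apply/exists_inP; apply: contraTT hB => /exists_inPn full.
  rewrite -leqNgt -sum_nat_const -ts [X in (_ <= X)%N](bigID (mem M)) /=.
  apply: leq_trans (leq_addr _ _); apply: leq_sum => i /full.
  by rewrite -leqNgt.
exists (fun j => if j == i then (t i).+1 else t j); split.
- by move=> j; case: eqP.
- by move=> j jM; case: eqP => [ji|_]; [rewrite ji iM in jM | exact: tM].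
- rewrite (bigD1 i) //= eqxx (eq_bigr t) => [|j /negbTE -> //].
  by rewrite -ts [in RHS](bigD1 i).
Qed.

End Combinatorics.

Section RowWeight.
Variables (F : finFieldType) (r : nat).
Implicit Types y : 'rV[F]_r.
Local Open Scope ring_scope.

Lemma nrt_row_weight_leP y k :
  reflect (forall j : 'I_r, (k <= j)%N -> y 0 j = 0) (nrt_row_weight y <= k)%N.
Proof.
apply: (iffP (bigmax_leqP _ _ _)) => [wy j kj | y0 j nz_yj].
  by apply: contraTeq kj => /wy; rewrite -ltnNge.
by rewrite leqNgt; apply: contra nz_yj => /y0 ->.
Qed.

Lemma nrt_row_weight_coef0 y (j : 'I_r) : (nrt_row_weight y <= j)%N -> y 0 j = 0.
Proof. by move/nrt_row_weight_leP; apply. Qed.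

Lemma nrt_row_weight_ge y (j : 'I_r) : y 0 j != 0 -> (j < nrt_row_weight y)%N.
Proof.
exact: (@leq_bigmax_cond _ (fun j : 'I_r => y 0 j != 0) (fun j : 'I_r => j.+1)).
Qed.

Lemma nrt_row_weightD y y' :
  (nrt_row_weight (y + y') <= nrt_row_weight y + nrt_row_weight y')%N.
Proof.
apply/nrt_row_weight_leP => j hj; rewrite mxE.
by rewrite !nrt_row_weight_coef0 ?addr0 // (leq_trans _ hj) ?leq_addr ?leq_addl.
Qed.

Lemma nrt_row_weightN y : nrt_row_weight (- y) = nrt_row_weight y.
Proof.
suff le_wN y' : (nrt_row_weight (- y') <= nrt_row_weight y')%N.
  by apply/eqP; rewrite eqn_leq le_wN -{1}[y]opprK le_wN.
by apply/nrt_row_weight_leP => j hj; rewrite mxE nrt_row_weight_coef0 ?oppr0.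
Qed.

Definition nrt_raise y t : 'rV[F]_r :=
  if (nrt_row_weight y < t)%N then \row_j (j.+1 == t)%:R else 0.

Lemma nrt_row_weight_raise y t : (nrt_row_weight (nrt_raise y t) <= t)%N.
Proof.
rewrite /nrt_raise; case: ifP => _; apply/nrt_row_weight_leP => j hj; rewrite mxE //.
by case: eqP => // ej; move: hj; rewrite -ej ltnn.
Qed.

Lemma nrt_row_weight_add_raise y t : (t <= r)%N ->
  (maxn (nrt_row_weight y) t <= nrt_row_weight (y + nrt_raise y t))%N.
Proof.
rewrite /nrt_raise; case: ltnP => [lt_wt le_tr | le_tw _]; last first.
  by rewrite addr0.
have t_pos : (0 < t)%N by rewrite (leq_trans _ lt_wt).
have lt_t1r : (t.-1 < r)%N by rewrite prednK.
pose j := Ordinal lt_t1r.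
have yj0 : y 0 j = 0 by rewrite nrt_row_weight_coef0 // -ltnS prednK.
suff : (j < nrt_row_weight (y + \row_j (j.+1 == t)%:R))%N by rewrite /= prednK.
by apply: nrt_row_weight_ge; rewrite !mxE yj0 add0r /= prednK // eqxx oner_neq0.
Qed.

End RowWeight.

Section Weight.
Variables (F : finFieldType) (s r : nat).
Implicit Types x c : 'M[F]_(s, r).
Local Open Scope ring_scope.

Lemma nrt_weightB x c : (nrt_weight (x - c) <= nrt_weight x + nrt_weight c)%N.
Proof.
rewrite /nrt_weight -big_split; apply: leq_sum => i _.
by rewrite linearB /= -(nrt_row_weightN (row i c)) nrt_row_weightD.
Qed.

Lemma nrt_ball_far_disjoint c R : (R.*2 < nrt_weight c)%N ->
  [disjoint nrt_ball c R & nrt_ball 0 R].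
Proof.
move=> far_c; rewrite disjoints_subset; apply/subsetP => y.
rewrite !inE /nrt_dist subr0 -ltnNge => near_c.
have := nrt_weightB y (y - c); rewrite opprB addrC subrK => le_c.
apply: contraTT (leq_trans far_c le_c); rewrite -!leqNgt -addnn => le_y.
exact: leq_add.
Qed.

Lemma R_closed_cover R (A : {set 'M[F]_(s, r)}) :
  (forall x, x \notin A ->
     exists2 c, x \in nrt_ball c R & [disjoint nrt_ball c R & A]) ->
  R_closed R A.
Proof.
move=> cover; exists [set c | [disjoint nrt_ball c R & A]].
apply/setP => x; rewrite in_setC; apply/idP/idP => [/cover[c xc dcA] | /bigcupP[c]].
  by apply/bigcupP; exists c; rewrite // inE.
by rewrite inE => /disjointFr dcA /dcA ->.
Qed.

Lemma ex_far_center_near x R :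
  (R <= (s - R.+1) * r)%N -> (R < nrt_weight x)%N ->
  exists2 c, (R.*2 < nrt_weight c)%N & (nrt_dist x c <= R)%N.
Proof.
move=> room heavy_x; pose a i := nrt_row_weight (row i x).
have [N cardN heavyN] := ex_small_heavy_set heavy_x.
have roomN : (R <= #|~: N| * r)%N.
  by rewrite (leq_trans room) // leq_mul2r cardsCs setCK card_ord leq_sub2l ?orbT.
have [t [t_le_r tN sum_t]] := ex_capped_distribution roomN.
pose z : 'M[F]_(s, r) := \matrix_i nrt_raise (row i x) (t i).
exists (x + z); last first.
  rewrite /nrt_dist opprD addNKr /nrt_weight -sum_t; apply: leq_sum => i _.
  by rewrite linearN /= nrt_row_weightN rowK nrt_row_weight_raise.
have max_le i : (maxn (a i) (t i) <= nrt_row_weight (row i (x + z)))%N.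
  by rewrite linearD /= rowK; exact: nrt_row_weight_add_raise (t_le_r i).
have sum_max_le : (\sum_i maxn (a i) (t i) <= nrt_weight (x + z))%N.
  by apply: leq_sum => i _; exact: max_le.
apply: leq_trans sum_max_le.
rewrite (bigID (mem N)) /= -addnn -addSn; apply: leq_add.
  by apply: leq_trans heavyN _; apply: leq_sum => i _; apply: leq_maxl.
rewrite -sum_t (bigID (mem N)) /= big1 ?add0n => [|i iN]; last first.
  by apply: tN; rewrite inE negbK.
by apply: leq_sum => i _; apply: leq_maxr.
Qed.

End Weight.

Theorem mainTheorem6 (F : finFieldType) (s r R : nat)
  (hs : (0 < s)%N) (hr : (0 < r)%N) (hR : (0 < R)%N)
  (hdelta : ((r + 1) * (R + 1) <= s * r + 1)%N) :
  R_closed R (nrt_ball (0 : 'M[F]_(s, r)) R).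
Proof.
have room : (R <= (s - R.+1) * r)%N by rewrite mulnBl; nia.
apply: R_closed_cover => x; rewrite inE /nrt_dist subr0 -ltnNge => heavy_x.
have [c far_c near_c] := ex_far_center_near room heavy_x.
by exists c; rewrite ?inE ?nrt_ball_far_disjoint.
Qed.
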